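(* Let $S\subset\mathbb C^3_{x,y,z}$ be the smooth surface $x+y+xyz=1$, and let $L_1=\{x=0\}$, $L_2=\{yz+1=0\}$, $L_3=\{y=0\}$, $L_4=\{xz+1=0\}$, $L_5=\{z=0\}$ (zero loci in $S$); these are lines in $S$ (explicitly $L_1=\{(0,1,z)\}$, $L_2=\{(x,1,-1)\}$, $L_3=\{(1,0,z)\}$, $L_4=\{(1,y,-1)\}$, $L_5=\{(x,1-x,0)\}$). Then for every non-constant morphism $\phi:\mathbb C\to S$ the image $\phi(\mathbb C)$ is contained in one of $L_1,\dots,L_5$; i.e. $L_1,\dots,L_5$ are the only polynomial curves in $S$.
   Context: A polynomial curve in $S$ is the image of a non-constant morphism $\mathbb C\to S$. *)

(* The base field C is rendered as an arbitrary
   numClosedFieldType (algebraically closed, characteristic 0). *)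
From HB Require Import structures.
From mathcomp Require Import all_boot all_order all_algebra.
Set Implicit Arguments. Unset Strict Implicit. Unset Printing Implicit Defensive.
Import Order.TTheory GRing.Theory Num.Theory.
Local Open Scope ring_scope.

Definition onS (R : numClosedFieldType) (x y z : R) : Prop :=
  x + y + x * y * z = 1.

(* A morphism C -> C^3 is a triple of polynomials (p,q,r); it lands in S. *)
Definition morphism_to_S (R : numClosedFieldType) (p q r : {poly R}) : Prop :=
  forall t : R, onS p.[t] q.[t] r.[t].

Definition nonconstant_map (R : numClosedFieldType) (p q r : {poly R}) : Prop :=
  exists t1 t2 : R, (p.[t1], q.[t1], r.[t1]) <> (p.[t2], q.[t2], r.[t2]).

Definition L1 (R : numClosedFieldType) (x y z : R) : Prop := x = 0.
Definition L2 (R : numClosedFieldType) (x y z : R) : Prop := y * z + 1 = 0.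
Definition L3 (R : numClosedFieldType) (x y z : R) : Prop := y = 0.
Definition L4 (R : numClosedFieldType) (x y z : R) : Prop := x * z + 1 = 0.
Definition L5 (R : numClosedFieldType) (x y z : R) : Prop := z = 0.

Definition image_in (R : numClosedFieldType) (L : R -> R -> R -> Prop)
  (p q r : {poly R}) : Prop :=
  forall t : R, L p.[t] q.[t] r.[t].

From HB Require Import structures.
From mathcomp Require Import all_boot all_order all_algebra.
From mathcomp Require Import zify ring.
Set Implicit Arguments. Unset Strict Implicit. Unset Printing Implicit Defensive.
Import Order.TTheory GRing.Theory Num.Theory.
Local Open Scope ring_scope.

(* A polynomial curve (p, q, r) in S satisfies p + q + pqr = 1 as polynomials.
   Comparing degrees, deg p + deg q + deg r <= max (deg p, deg q) whenever
   p, q, r are nonzero, so r is a constant c and one of p, q, say p, is a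
   constant a.  Then q (ac + 1) = 1 - a: either ac + 1 = 0, which is the line
   L4 (resp. L2), or q is constant too and the curve is a point.  The cases
   p = 0, q = 0, r = 0 are the lines L1, L3, L5. *)

Lemma poly_eq0_horner (R : numDomainType) (s : {poly R}) :
  (forall t : R, s.[t] = 0) -> s = 0.
Proof.
move=> s0; apply: (@roots_geq_poly_eq0 _ s [seq i%:R | i <- iota 0 (size s)]).
- by apply/allP => x /mapP [i _ ->]; rewrite /root s0.
- by rewrite map_inj_uniq ?iota_uniq // => m n /eqP; rewrite eqr_nat => /eqP.
- by rewrite size_map size_iota.
Qed.

Lemma morphism_to_S_poly_eq (R : numClosedFieldType) (p q r : {poly R}) :
  morphism_to_S p q r -> p + q + p * q * r = 1.
Proof.
move=> pqrS; apply/eqP; rewrite -subr_eq0; apply/eqP.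
by apply: poly_eq0_horner => t; rewrite !hornerE pqrS subrr.
Qed.

Lemma size_surface_poly (R : idomainType) (x y z : {poly R}) :
  x != 0 -> y != 0 -> z != 0 -> x + y + x * y * z = 1 ->
  (size z <= 1)%N /\ ((size x <= 1)%N \/ (size y <= 1)%N).
Proof.
move=> x0 y0 z0 xyz1.
have xyzE : x * y * z = 1 - (x + y) by rewrite -xyz1; ring.
have size_xyz : (size (x * y * z)%R <= maxn (size x) (size y))%N.
  rewrite xyzE; apply: (leq_trans (size_polyD _ _)).
  rewrite size_polyN size_poly1 geq_max size_polyD andbT.
  by rewrite leq_max size_poly_gt0 x0.
rewrite !size_mul ?mulf_neq0 // in size_xyz.
rewrite -!size_poly_gt0 in x0 y0 z0.
lia.
Qed.

Lemma surface_poly_line_or_const (R : fieldType) (x y z : {poly R}) :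
  x + y + x * y * z = 1 -> (size x <= 1)%N -> (size z <= 1)%N ->
  x`_0 * z`_0 + 1 = 0 \/ (size y <= 1)%N.
Proof.
move=> xyz1 /size1_polyC xE /size1_polyC zE.
set a := x`_0 in xE *; set c := z`_0 in zE *.
have [k0|k0] := eqVneq (a * c + 1) 0; [by left | right].
have yk : (a * c + 1) *: y = (1 - a)%:P.
  move: xyz1; rewrite xE zE => xyz1.
  by rewrite -mul_polyC polyCB polyCD polyCM polyC1 -{2}xyz1; ring.
by rewrite -(size_scale y k0) yk size_polyC_leq1.
Qed.

Lemma const_polys_not_nonconstant (R : numClosedFieldType) (p q r : {poly R}) :
  (size p <= 1)%N -> (size q <= 1)%N -> (size r <= 1)%N -> ~ nonconstant_map p q r.
Proof.
move=> /size1_polyC pE /size1_polyC qE /size1_polyC rE [t1 [t2]]; apply.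
by rewrite pE qE rE !hornerC.
Qed.

Theorem lemma8p10 (R : numClosedFieldType) (p q r : {poly R}) :
  morphism_to_S p q r -> nonconstant_map p q r ->
  image_in (@L1 R) p q r \/ image_in (@L2 R) p q r \/ image_in (@L3 R) p q r \/
  image_in (@L4 R) p q r \/ image_in (@L5 R) p q r.
Proof.
move=> /morphism_to_S_poly_eq pqr1 pqr_nc.
have [p0|p0] := eqVneq p 0; first by left => t; rewrite /L1 p0 horner0.
have [q0|q0] := eqVneq q 0; first by right; right; left => t; rewrite /L3 q0 horner0.
have [r0|r0] := eqVneq r 0; first by right; right; right; right => t; rewrite /L5 r0 horner0.
have [rc [pc|qc]] := size_surface_poly p0 q0 r0 pqr1.
- have [L4pr|qc] := surface_poly_line_or_const pqr1 pc rc; last first.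
    by case: (const_polys_not_nonconstant pc qc rc pqr_nc).
  right; right; right; left => t.
  by rewrite /L4 (size1_polyC pc) (size1_polyC rc) !hornerC; exact: L4pr.
- have qpr1 : q + p + q * p * r = 1 by rewrite (addrC q) (mulrC q).
  have [L2qr|pc] := surface_poly_line_or_const qpr1 qc rc; last first.
    by case: (const_polys_not_nonconstant pc qc rc pqr_nc).
  right; left => t.
  by rewrite /L2 (size1_polyC qc) (size1_polyC rc) !hornerC; exact: L2qr.
Qed.
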